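(* Let $k\geq 2$, let $G$ be a graph of order $n$, and let $w$ be a vertex of $G$. Suppose that every connected component $C$ of $G-w$ satisfies either $v(C)=2k$ or $e(C)\leq (k-1)\,v(C)$. If $n\geq 6k+13$, then $q(G)<n+2k-2$.
   Context: All graphs are finite and simple. $G-w$ is the graph obtained from $G$ by deleting the vertex $w$. $v(C)$ and $e(C)$ are the numbers of vertices and edges of $C$. For a graph $G$, the signless Laplacian is $Q(G)=D(G)+A(G)$, where $D(G)$ is the diagonal matrix of vertex degrees and $A(G)$ is the adjacency matrix; $q(G)$ denotes the largest eigenvalue of $Q(G)$. *)

From HB Require Import structures.
From mathcomp Require Import all_boot all_order all_algebra.
Set Implicit Arguments. Unset Strict Implicit. Unset Printing Implicit Defensive.
Import Order.TTheory GRing.Theory Num.Theory.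

Definition simple_graph (T : finType) (e : rel T) : Prop :=
  symmetric e /\ irreflexive e.

Definition deg (T : finType) (e : rel T) (x : T) : nat := #|[set y | e x y]|.

Definition del_rel (T : finType) (e : rel T) (w : T) : rel T :=
  fun x y => [&& e x y, x != w & y != w].

Definition comp_del (T : finType) (e : rel T) (w x : T) : {set T} :=
  [set y | (y != w) && connect (del_rel e w) x y].

Definition ecount (T : finType) (e : rel T) (C : {set T}) : nat :=
  #|[set E : {set T} | (E \subset C) &&
       [exists x : T, exists y : T, [&& x != y, e x y & E == [set x; y]]]]|.

(* signless Laplacian Q(G) = D(G) + A(G), vertices indexed via enum_val *)
Definition signlessQ (R : nzRingType) (T : finType) (e : rel T) : 'M[R]_#|T| :=
  \matrix_(i, j)
    ((if i == j then (deg e (enum_val i))%:R else 0%R) +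
     (e (enum_val i) (enum_val j))%:R)%R.

From HB Require Import structures.
From mathcomp Require Import all_boot all_order all_algebra.
From mathcomp Require Import zify.
Import Order.TTheory GRing.Theory Num.Theory.
Set Implicit Arguments. Unset Strict Implicit. Unset Printing Implicit Defensive.

(* Let n = |V(G)|, c = 2k - 2 and H = G - w.  The bound q(G) < n + c is proved
   with a positive test vector Y satisfying (Q Y)_x < (n + c) Y_x at every
   vertex x: for a nonnegative matrix this forces every eigenvalue below n + c
   (a Collatz-Wielandt type argument, eigenvalue_lt_of_subinvariant).
   The vector is
     Y_w = n (n - 1),
     Y_p = n (2k - 1) - 1        if the H-component of p has order 2k,
     Y_p = n (d_H(p) + 1) - 1    otherwise.
   Row w is controlled by the total weight of H, which is at most
   n (2k - 1) - 1 per vertex: on a component of order 2k this is the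
   definition, on the other components it follows from the handshake lemma
   and e(C) <= (k - 1) v(C).  A row p != w is bounded by
   (d_H(p) + 1) Y_p + Y_w + sum of Y over the H-neighbours of p; outside the
   components of order 2k this is controlled by a bound on the degree sum of
   the H-neighbours of p.  The file first proves the linear-algebra bound and
   the arithmetic inequalities, then the combinatorics of the components of
   G - w, and finally combines them. *)

Section SubinvariantVector.
Local Open Scope ring_scope.

(* If a nonnegative matrix M has a positive vector y with (M y)_i < c y_i for
   every i, then every eigenvalue of M is smaller than c: for a left
   eigenvector v, the vector z = |v| satisfies a z <= z M, and pairing with y
   gives a (z . y) <= z M y < c (z . y). *)
Lemma eigenvalue_lt_of_subinvariant (R : realFieldType) (n : nat) (M : 'M[R]_n)
    (y : 'I_n -> R) (c : R) :
  (forall i j, 0 <= M i j) -> (forall i, 0 < y i) ->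
  (forall i, \sum_j M i j * y j < c * y i) ->
  forall a, eigenvalue M a -> a < c.
Proof.
move=> M_ge0 y_gt0 My_lt a /eigenvalueP [v vM v_neq0].
pose z i := `|v ord0 i|.
have z_ge0 i : 0 <= z i by exact: normr_ge0.
have az_le j : a * z j <= \sum_i z i * M i j.
  have : (v *m M) ord0 j = (a *: v) ord0 j by rewrite vM.
  rewrite !mxE => vMj.
  apply: le_trans (ler_wpM2r (z_ge0 j) (ler_norm a)) _.
  rewrite /z -normrM -vMj; apply: le_trans (ler_norm_sum _ _ _) _.
  by apply: ler_sum => i _; rewrite normrM (ger0_norm (M_ge0 i j)).
have [i0 z_i0] : exists i0, 0 < z i0.
  apply/existsP; move: v_neq0; apply: contraNT; rewrite negb_exists => /forallP z0.
  apply/eqP/rowP => j; rewrite mxE; apply/eqP.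
  by rewrite -normr_eq0 eq_le z_ge0 andbT leNgt z0.
pose W := \sum_j z j * y j.
have W_gt0 : 0 < W.
  rewrite /W (bigD1 i0) //= ltr_wpDr ?mulr_gt0 //.
  by apply: sumr_ge0 => i _; rewrite mulr_ge0 // ltW.
rewrite -(ltr_pM2r W_gt0).
apply: (@le_lt_trans _ _ (\sum_i z i * \sum_j M i j * y j)).
  rewrite /W mulr_sumr; apply: (@le_trans _ _ (\sum_j (\sum_i z i * M i j) * y j)).
    by apply: ler_sum => j _; rewrite mulrA ler_wpM2r ?az_le // ltW.
  rewrite (eq_bigr (fun j => \sum_i z i * M i j * y j)) => [|j _]; last first.
    by rewrite mulr_suml.
  rewrite exchange_big; apply: ler_sum => i _; rewrite mulr_sumr.
  by apply: ler_sum => j _; rewrite mulrA.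
have -> : c * W = \sum_i z i * (c * y i).
  by rewrite /W mulr_sumr; apply: eq_bigr => i _; rewrite mulrCA.
rewrite (bigD1 i0) //= [X in _ < X](bigD1 i0) //= ltr_leD ?ltr_pM2l //.
by apply: ler_sum => i _; rewrite ler_wpM2l // ltW.
Qed.

End SubinvariantVector.

(* For a vertex p != w outside the components
   of order 2k, write d = d_H(p), m for the order of its component and S for
   the degree sum of its H-neighbours.  The inequality
     S + d^2 + 3d + 2 <= n d + c (d + 1)
   is what the row p of Q Y < (n + c) Y needs; it is proved separately in four
   ranges of d (the hypotheses are the combinatorial bounds on S, where Bs is
   the degree sum of the rest of the component). *)
Lemma nbr_ineq_small (n c m d S : nat) :
  2 <= c -> d < c -> m < n -> S + d <= d * m ->
  S + d * d + 3 * d + 2 <= n * d + c * (d + 1).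
Proof. by move=> *; nia. Qed.

Lemma nbr_ineq_mid (n c m S Bs : nat) :
  2 <= c -> 3 * c + 19 <= n -> m < n -> S <= c * c + Bs -> c + S + Bs <= c * m ->
  S + c * c + 3 * c + 2 <= n * c + c * (c + 1).
Proof. by move=> *; nia. Qed.

Lemma nbr_ineq_large (n c m d S : nat) :
  3 * c + 19 <= n -> c < d -> d + 2 < n -> m < n -> d + S <= c * m ->
  S + d * d + 3 * d + 2 <= n * d + c * (d + 1).
Proof. by move=> *; nia. Qed.

Lemma nbr_ineq_full (n c m d S : nat) :
  d + 2 = n -> m < n -> d + S <= c * m ->
  S + d * d + 3 * d <= n * d + c * (d + 1).
Proof. by move=> *; nia. Qed.

(* The neighbourhood inequality in all ranges: strict by 2, or weak when d is
   large (which is then compensated in weight_ineq_other). *)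
Lemma nbr_ineq (n c m d S Bs : nat) :
  2 <= c -> 3 * c + 19 <= n -> d < m -> m < n ->
  S + d <= d * m -> S <= d * d + Bs -> d + S + Bs <= c * m ->
  S + d * d + 3 * d + 2 <= n * d + c * (d + 1) \/
  S + d * d + 3 * d <= n * d + c * (d + 1) /\ n + c < 2 * d + 1.
Proof.
move=> c_ge2 n_large dm mn S_le S_Bs SBs_le.
have [d_lt_c|c_le_d] := ltnP d c.
  by left; exact: nbr_ineq_small c_ge2 d_lt_c mn S_le.
have [d_le_c|c_lt_d] := leqP d c.
  have d_eq_c : d = c by apply/eqP; rewrite eqn_leq d_le_c c_le_d.
  by subst d; left; exact: nbr_ineq_mid c_ge2 n_large mn S_Bs SBs_le.
have SB_le : d + S <= c * m by lia.
have [dn|dn] := ltnP (d + 2) n.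
  by left; exact: nbr_ineq_large n_large c_lt_d dn mn SB_le.
have d_full : d + 2 = n by lia.
by right; split; [exact: nbr_ineq_full d_full mn SB_le | lia].
Qed.

(* Row p of Q Y < (n + c) Y outside the components of order 2k, with
   Y_p = n (d + 1) - 1 and SY the weight of the H-neighbours of p: expanding
   both sides reduces it to n times the neighbourhood inequality. *)
Lemma weight_ineq_other (n c d S Yp SY : nat) : c < n ->
  Yp + 1 = n * (d + 1) -> SY + d = n * (d + S) ->
  S + d * d + 3 * d + 2 <= n * d + c * (d + 1) \/
  S + d * d + 3 * d <= n * d + c * (d + 1) /\ n + c < 2 * d + 1 ->
  (d + 1) * Yp + n * (n - 1) + SY < (n + c) * Yp.
Proof.
move=> cn Yp_eq SY_eq ineq.
have lhs_eq : (d + 1) * Yp + n * (n - 1) + SY + n + 2 * d + 1 =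
              n * (S + d * d + 3 * d + n + 1).
  have e1 : (d + 1) * (Yp + 1) = (d + 1) * (n * (d + 1)) by rewrite Yp_eq.
  have e2 : n * (n - 1) + n = n * n by rewrite -mulnSr subn1 prednK //; lia.
  rewrite !mulnDr !mulnDl !muln1 !mul1n in e1 *; lia.
have rhs_eq : (n + c) * Yp + n + c = n * (n * d + c * (d + 1) + n).
  have e1 : (n + c) * (Yp + 1) = (n + c) * (n * (d + 1)) by rewrite Yp_eq.
  rewrite !mulnDr !mulnDl !muln1 in e1 *; lia.
by case: ineq => [ineq|[ineq d_large]];
  have := leq_mul (leqnn n) ineq; rewrite !mulnDr; lia.
Qed.

Lemma weight_ineq_special (n c d b : nat) :
  2 <= c -> 3 * c + 19 <= n -> d <= c + 1 -> b + 1 = n * (c + 1) ->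
  (d + 1) * b + n * (n - 1) + d * b < (n + c) * b.
Proof. by move=> *; nia. Qed.

Lemma weight_ineq_w (n c D b Sm : nat) :
  2 <= n -> D <= n - 1 -> Sm <= (n - 1) * b -> b + 1 = n * (c + 1) ->
  D * (n * (n - 1)) + Sm < (n + c) * (n * (n - 1)).
Proof. by move=> *; nia. Qed.

Lemma card_sep_sum (U : finType) (A : {set U}) (P : pred U) :
  #|[set x in A | P x]| = \sum_(x in A) P x.
Proof.
rewrite -sum1_card big_mkcond [RHS]big_mkcond /=.
by apply: eq_bigr => x _; rewrite inE; case: (x \in A); case: (P x).
Qed.

Section ComponentsOfGminusW.
Variables (T : finType) (e : rel T) (w : T).
Hypotheses (e_sym : symmetric e) (e_irr : irreflexive e).

Local Notation H := (del_rel e w).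
Local Notation C := (comp_del e w).

Definition nbH (p : T) : {set T} := [set q | H p q].
Definition degH (p : T) : nat := #|nbH p|.

Lemma H_sym : symmetric H.
Proof. by move=> x y; rewrite /del_rel e_sym [(x != w) && _]andbC. Qed.

Lemma H_irr x : H x x = false.
Proof. by rewrite /del_rel e_irr. Qed.

Lemma comp_self p : p != w -> p \in C p.
Proof. by move=> pw; rewrite inE pw connect0. Qed.

Lemma comp_neq_w p q : q \in C p -> q != w.
Proof. by rewrite inE => /andP []. Qed.

Lemma comp_eq p q : q \in C p -> C q = C p.
Proof.
rewrite inE => /andP [_ pq]; have Hsym := sym_connect_sym H_sym.
apply/setP => y; rewrite !inE; case: (y != w) => //=.
apply/idP/idP => [|py]; first exact: connect_trans.
by rewrite Hsym in pq; apply: connect_trans pq py.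
Qed.

Lemma comp_closed p x y : x \in C p -> H x y -> y \in C p.
Proof.
move=> xC xy; rewrite -(comp_eq xC) inE (connect1 xy) andbT.
by case/and3P: xy.
Qed.

Lemma nbH_comp p : p != w -> nbH p \subset C p.
Proof. by move=> pw; apply/subsetP => q; rewrite inE; apply: comp_closed (comp_self pw). Qed.

Lemma degH_lt p : p != w -> degH p < #|C p|.
Proof.
move=> pw; rewrite (cardsD1 p) comp_self // add1n ltnS; apply: subset_leq_card.
apply/subsetP => q qN; rewrite in_setD1 (subsetP (nbH_comp pw)) // andbT.
by apply: contraTneq qN => ->; rewrite inE H_irr.
Qed.

Lemma card_comp_lt p : #|C p| < #|T|.
Proof.
have : C p \subset [set~ w] by apply/subsetP => q /comp_neq_w; rewrite !inE.
move/subset_leq_card; rewrite cardsC1 => /leq_ltn_trans; apply.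
by rewrite ltn_predL; apply/card_gt0P; exists w.
Qed.

Lemma deg_le_degH p : p != w -> deg e p <= degH p + 1.
Proof.
move=> pw; apply: leq_trans (_ : #|w |: nbH p| <= _).
  apply: subset_leq_card; apply/subsetP => y.
  by rewrite !inE /del_rel => ->; rewrite pw orbN.
by rewrite cardsU1 addnC leq_add2l; case: (w \notin _).
Qed.

Lemma nbr_sum_le (Y : T -> nat) p : p != w ->
  \sum_q e p q * Y q <= Y w + \sum_(q in nbH p) Y q.
Proof.
move=> pw; have wN : w \notin nbH p by rewrite inE /del_rel eqxx !andbF.
rewrite -(big_setU1 _ wN) /= [X in _ <= X]big_mkcond /=; apply: leq_sum => q _.
case epq: (e p q); rewrite ?mul0n // mul1n !inE /del_rel epq pw /=.
by case: eqP.
Qed.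

Lemma handshake (X : {set T}) :
  (forall x y, x \in X -> H x y -> y \in X) ->
  \sum_(x in X) degH x <= 2 * ecount e X.
Proof.
move=> X_closed.
set Es := [set E : {set T} | (E \subset X) &&
  [exists x, exists y, [&& x != y, e x y & E == [set x; y]]]].
have deg_le x : x \in X -> degH x <= #|[set E in Es | x \in E]|.
  move=> xX; rewrite /degH -(card_in_imset (f := fun y => [set x; y])); last first.
    move=> y y' yN _ /setP /(_ y); rewrite set22 => /esym /set2P [yx|//].
    by move: yN; rewrite inE yx H_irr.
  apply: subset_leq_card; apply/subsetP => _ /imsetP [y yN ->].
  rewrite inE in yN; have xy : x != y by apply: contraTneq yN => <-; rewrite H_irr.
  rewrite inE set21 andbT inE; apply/andP; split.
    by apply/subsetP => z /set2P [] ->; [| apply: X_closed yN].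
  apply/existsP; exists x; apply/existsP; exists y.
  by case/and3P: yN => -> _ _; rewrite xy eqxx.
have incidences : \sum_(x in X) #|[set E in Es | x \in E]| = 2 * #|Es|.
  under eq_bigr do rewrite card_sep_sum.
  rewrite exchange_big /= mulnC -sum_nat_const; apply: eq_bigr => E.
  rewrite inE => /andP [EX /existsP [a /existsP [b /and3P [ab _ /eqP E_ab]]]].
  subst E.
  have -> : 2 = #|[set a; b]| by rewrite cards2 ab.
  rewrite -card_sep_sum; apply: eq_card => x; rewrite inE; apply: andb_idl.
  exact: (subsetP EX).
by rewrite /ecount -/Es -incidences; apply: leq_sum.
Qed.

(* The H-neighbours of p have degree sum at most d_H(p)^2 plus the degree sum
   of the rest of the component: an H-neighbour v of p is adjacent to at most
   d_H(p) vertices of {p} u N_H(p), and its other neighbours lie in the rest. *)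
Lemma nbr_degree_sum p : p != w ->
  \sum_(v in nbH p) degH v <=
  degH p * degH p + \sum_(x in C p :\: (p |: nbH p)) degH x.
Proof.
move=> pw; set A := nbH p; set B := C p :\: (p |: A).
have card_pA : #|p |: A| = (degH p).+1 by rewrite cardsU1 inE H_irr.
have deg_v v : v \in A -> degH v <= degH p + \sum_(x in B) H v x.
  move=> vA; rewrite -card_sep_sum.
  have : nbH v \subset ((p |: A) :\ v) :|: [set x in B | H v x].
    apply/subsetP => y; rewrite inE => vy.
    have yC : y \in C p by apply: comp_closed vy; apply: (subsetP (nbH_comp pw)).
    have yv : y != v by apply: contraTneq vy => ->; rewrite H_irr.
    rewrite in_setU in_setD1 yv; case yA: (y \in p |: A) => //=.
    by rewrite inE in_setD yA yC vy.
  move/subset_leq_card/leq_trans; apply; apply: (leq_trans (leq_card_setU _ _).1).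
  by rewrite leq_add2r; move: card_pA; rewrite (cardsD1 v) (setU1r p vA) add1n => -[->].
apply: (leq_trans (leq_sum _ deg_v)); rewrite big_split /= sum_nat_const leq_add2l.
rewrite exchange_big /=; apply: leq_sum => x _; rewrite -card_sep_sum.
apply: subset_leq_card; apply/subsetP => v.
by rewrite inE => /andP [_ vx]; rewrite inE H_sym.
Qed.

Variable k : nat.

Definition weight (p : T) : nat :=
  if p == w then #|T| * (#|T| - 1)
  else if #|C p| == 2 * k then #|T| * (2 * k - 1) - 1
  else #|T| * (degH p + 1) - 1.

Lemma weight_comp p q : q \in C p -> weight q =
  if #|C p| == 2 * k then #|T| * (2 * k - 1) - 1 else #|T| * (degH q + 1) - 1.
Proof. by move=> qC; rewrite /weight (negbTE (comp_neq_w qC)) (comp_eq qC). Qed.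

Hypothesis k_ge2 : 2 <= k.
Hypothesis n_large : 6 * k + 13 <= #|T|.
Hypothesis comp_cond : forall x, x != w ->
  #|C x| = 2 * k \/ ecount e (C x) <= (k - 1) * #|C x|.

(* Every component carries weight at most n (2k - 1) - 1 per vertex; outside
   the components of order 2k this is the handshake inequality together with
   e(C) <= (k - 1) v(C). *)
Lemma comp_weight_sum p : p != w ->
  \sum_(q in C p) weight q <= #|C p| * (#|T| * (2 * k - 1) - 1).
Proof.
move=> pw; set n := #|T|; set m := #|C p|.
have [m2k | m_ne] := eqVneq m (2 * k).
  rewrite (eq_bigr (fun=> n * (2 * k - 1) - 1)) ?sum_nat_const // => q qC.
  by rewrite (weight_comp qC) -/m m2k eqxx.
have E_le : ecount e (C p) <= (k - 1) * m.
  by case: (comp_cond pw) => // /eqP; rewrite -/m (negbTE m_ne).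
have deg_sum : \sum_(q in C p) degH q <= 2 * ecount e (C p).
  exact: handshake (@comp_closed p).
have weight_sum : \sum_(q in C p) weight q + m = n * (\sum_(q in C p) degH q + m).
  have -> : m = \sum_(q in C p) 1 by rewrite sum1_card.
  rewrite -!big_split big_distrr /=; apply: eq_bigr => q qC.
  by rewrite (weight_comp qC) (negbTE m_ne) subnK // muln_gt0 addn1 andbT; lia.
nia.
Qed.

(* Summing over the components, G - w carries weight at most
   (n - 1) (n (2k - 1) - 1). *)
Lemma weight_sum_off_w :
  \sum_(q in [set~ w]) weight q <= (#|T| - 1) * (#|T| * (2 * k - 1) - 1).
Proof.
set b := #|T| * (2 * k - 1) - 1.
have same_comp r q : r != w -> (q \in [set~ w]) && (C q == C r) = (q \in C r).
  move=> rw; rewrite in_setC1; apply/idP/idP => [/andP [qw /eqP <-]|qC].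
    exact: comp_self.
  by rewrite (comp_neq_w qC) (comp_eq qC) eqxx.
rewrite (partition_big_imset C) /=.
apply: (@leq_trans (\sum_(X in C @: [set~ w]) (\sum_(q in [set~ w] | C q == X) 1) * b)).
  apply: leq_sum => _ /imsetP [r rw ->]; rewrite in_setC1 in rw.
  rewrite (eq_bigl (fun q => q \in C r)) => [|q]; last exact: same_comp r q rw.
  rewrite [X in _ <= X * _](eq_bigl (fun q => q \in C r)) => [|q]; last exact: same_comp r q rw.
  by rewrite sum1_card; apply: comp_weight_sum.
by rewrite -big_distrl /= -(partition_big_imset C) /= sum1_card (cardsC1 w) subn1.
Qed.

Lemma weight_local_w :
  deg e w * weight w + \sum_q e w q * weight q < (#|T| + 2 * k - 2) * weight w.
Proof.
have deg_w : deg e w <= #|T| - 1.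
  rewrite /deg subn1 -(cardsC1 w) subset_leq_card //.
  by apply/subsetP => y; rewrite !inE; apply: contraTneq => ->; rewrite e_irr.
have nbr_w : \sum_q e w q * weight q <= \sum_(q in [set~ w]) weight q.
  rewrite [X in _ <= X]big_mkcond /=; apply: leq_sum => q _; rewrite !inE.
  by case: eqP => [->|_]; rewrite ?e_irr ?mul0n //; case: (e w q); rewrite ?mul1n.
have -> : weight w = #|T| * (#|T| - 1) by rewrite /weight eqxx.
have -> : #|T| + 2 * k - 2 = #|T| + (2 * k - 2) by lia.
apply: weight_ineq_w deg_w (leq_trans nbr_w weight_sum_off_w) _; first by lia.
by rewrite subnK; [congr (_ * _); lia | rewrite muln_gt0; lia].
Qed.

Lemma Qweight_le p : p != w ->
  deg e p * weight p + \sum_q e p q * weight q <=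
  (degH p + 1) * weight p + #|T| * (#|T| - 1) + \sum_(q in nbH p) weight q.
Proof.
move=> pw; rewrite -addnA leq_add ?leq_mul ?deg_le_degH //.
have -> : #|T| * (#|T| - 1) = weight w by rewrite /weight eqxx.
exact: nbr_sum_le.
Qed.

Lemma weight_local_special p : p != w -> #|C p| = 2 * k ->
  deg e p * weight p + \sum_q e p q * weight q < (#|T| + 2 * k - 2) * weight p.
Proof.
move=> pw m2k; apply: (leq_ltn_trans (Qweight_le pw)).
set b := #|T| * (2 * k - 1) - 1.
have weight_b q : q \in C p -> weight q = b by move=> qC; rewrite (weight_comp qC) m2k eqxx.
rewrite (weight_b p (comp_self pw)) (eq_bigr (fun=> b)) => [|q qN]; last first.
  exact/weight_b/(subsetP (nbH_comp pw)).
rewrite sum_nat_const -/(degH p).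
have d_le : degH p <= (2 * k - 2) + 1 by have := degH_lt pw; rewrite m2k; lia.
have -> : #|T| + 2 * k - 2 = #|T| + (2 * k - 2) by lia.
apply: weight_ineq_special d_le _; try lia.
by rewrite subnK; [congr (_ * _); lia | rewrite muln_gt0; lia].
Qed.

Lemma weight_local_other p : p != w -> #|C p| != 2 * k ->
  deg e p * weight p + \sum_q e p q * weight q < (#|T| + 2 * k - 2) * weight p.
Proof.
move=> pw m_ne; apply: (leq_ltn_trans (Qweight_le pw)).
set n := #|T|; set d := degH p; set m := #|C p|.
set S := \sum_(q in nbH p) degH q.
set Bs := \sum_(x in C p :\: (p |: nbH p)) degH x.
have nbH_C q : q \in nbH p -> q \in C p by apply: (subsetP (nbH_comp pw)).
have weight_C q : q \in C p -> weight q + 1 = n * (degH q + 1).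
  move=> qC; rewrite (weight_comp qC) (negbTE m_ne) subnK // muln_gt0 addn1 andbT.
  by rewrite /n; lia.
have nbr_weights : \sum_(q in nbH p) weight q + d = n * (d + S).
  have -> : d = \sum_(q in nbH p) 1 by rewrite sum1_card.
  rewrite -big_split addnC -big_split big_distrr /=; apply: eq_bigr => q qN.
  by rewrite weight_C ?nbH_C // addnC.
have S_le : S + d <= d * m.
  rewrite /S /d /degH -sum_nat_const -sum1_card -big_split /=.
  apply: leq_sum => q qN; have qC := nbH_C q qN.
  by rewrite addn1 /m -(comp_eq qC) degH_lt // (comp_neq_w qC).
have comp_degrees : \sum_(x in C p) degH x = d + S + Bs.
  rewrite (big_setID (p |: nbH p)) /=.
  have -> : C p :&: (p |: nbH p) = p |: nbH p.
    by apply/setIidPr; rewrite subUset sub1set comp_self // nbH_comp.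
  by rewrite big_setU1 //= inE H_irr.
have E_le : ecount e (C p) <= (k - 1) * m.
  by case: (comp_cond pw) => // /eqP; rewrite -/m (negbTE m_ne).
have dSB_le : d + S + Bs <= (2 * k - 2) * m.
  rewrite -comp_degrees; apply: (leq_trans (handshake (@comp_closed p))).
  have -> : (2 * k - 2) * m = 2 * ((k - 1) * m) by rewrite mulnA mulnBr muln1.
  by rewrite leq_mul2l E_le orbT.
have ineq := nbr_ineq _ _ (degH_lt pw) (card_comp_lt p) S_le (nbr_degree_sum pw) dSB_le.
have -> : n + 2 * k - 2 = n + (2 * k - 2) by lia.
apply: weight_ineq_other (weight_C p (comp_self pw)) nbr_weights (ineq _ _); lia.
Qed.

Lemma weight_gt0 x : 0 < weight x.
Proof.
rewrite /weight; case: ifP => _; first by rewrite muln_gt0; lia.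
by case: ifP => _; rewrite subn_gt0; nia.
Qed.

Lemma weight_subinvariant x :
  deg e x * weight x + \sum_q e x q * weight q < (#|T| + 2 * k - 2) * weight x.
Proof.
have [->|xw] := eqVneq x w; first exact: weight_local_w.
have [m2k|m_ne] := eqVneq #|C x| (2 * k).
  exact: weight_local_special.
exact: weight_local_other.
Qed.

End ComponentsOfGminusW.

Section SignlessLaplacian.
Local Open Scope ring_scope.

Lemma signlessQ_ge0 (R : numDomainType) (T : finType) (e : rel T) (i j : 'I_#|T|) :
  0 <= signlessQ R e i j.
Proof. by rewrite /signlessQ mxE addr_ge0 //; case: ifP. Qed.

Lemma signlessQ_row (R : nzRingType) (T : finType) (e : rel T) (Y : T -> nat)
    (i : 'I_#|T|) :
  \sum_j signlessQ R e i j * (Y (enum_val j))%:R =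
  (deg e (enum_val i) * Y (enum_val i) + \sum_q e (enum_val i) q * Y q)%:R.
Proof.
rewrite (eq_bigr (fun j =>
    (if i == j then (deg e (enum_val i))%:R else 0) * (Y (enum_val j))%:R +
    (e (enum_val i) (enum_val j))%:R * (Y (enum_val j))%:R)) => [|j _]; last first.
  by rewrite /signlessQ mxE mulrDl.
rewrite big_split natrD natr_sum /=; congr (_ + _).
  rewrite (bigD1 i) //= eqxx natrM big1 ?addr0 // => j /negbTE.
  by rewrite eq_sym => ->; rewrite mul0r.
rewrite [RHS](reindex (fun j : 'I_#|T| => enum_val j)) /=; last first.
  by exists enum_rank => [j _|q _]; rewrite ?enum_valK ?enum_rankK.
by apply: eq_bigr => j _; rewrite natrM.
Qed.

End SignlessLaplacian.

Unset Implicit Arguments.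

Theorem corollary2 (R : rcfType) (T : finType) (e : rel T) (w : T) (k : nat) :
  simple_graph e ->
  (2 <= k)%N ->
  (forall x : T, x != w ->
     #|comp_del e w x| = (2 * k)%N \/
     (ecount e (comp_del e w x) <= (k - 1) * #|comp_del e w x|)%N) ->
  (6 * k + 13 <= #|T|)%N ->
  forall a : R, eigenvalue (signlessQ R e) a ->
    (a < (#|T| + 2 * k - 2)%:R)%R.
Proof.
move=> [e_sym e_irr] k_ge2 comp_cond n_large.
apply: (eigenvalue_lt_of_subinvariant (y := fun i => (weight e w k (enum_val i))%:R%R)).
- exact: signlessQ_ge0.
- by move=> i; rewrite ltr0n; apply: weight_gt0.
- move=> i; rewrite signlessQ_row -natrM ltr_nat.
  by apply: weight_subinvariant.
Qed.
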